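(* Let $n>3$ be an integer and $[n]=\{0,1,\dots,n-1\}$. Let $B_0,B_1,\dots,B_m$ ($m\ge 1$) be a sequence of $3$-element subsets of $[n]$ such that $|B_t\setminus B_{t+1}|=1$ for every $0\le t<m$. For $0\le t<m$ let $e_t$ denote the unique element of $B_t\setminus B_{t+1}$ (the partition evicted after state $t$), and for $1\le t\le m$ let $\ell_t$ denote the unique element of $B_t\setminus B_{t-1}$ (the partition just loaded into state $t$). Suppose that: (1) for every $1\le t<m$, $\ell_t\neq e_t$; and (2) for every pair $a\neq b$ in $[n]$, the set $\{t\in\{0,\dots,m\} : \{a,b\}\subseteq B_t\}$ is a set of consecutive integers (possibly empty). Then the sequence is a Prefetching Supported Order: for every $0\le t<m$ there exists an edge bucket $(a,b)\in[n]^2$ that is pending at state $t$ and satisfies $e_t\notin\{a,b\}$.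
   Context: Node embeddings are split into $n$ partitions indexed by $[n]$; an edge bucket is an ordered pair $(a,b)\in[n]^2$. The GPU buffer holds exactly $3$ partitions at a time; the buffer states are the sets $B_0,\dots,B_m$, and consecutive states differ by swapping out exactly one partition and swapping in exactly one other. An edge bucket $(a,b)$ is processed at the first buffer state containing both $a$ and $b$; accordingly, $(a,b)$ is called pending at state $t$ if $\{a,b\}\subseteq B_t$ and there is no $s<t$ with $\{a,b\}\subseteq B_s$. A sequence of buffer states is a Prefetching Supported Order if for every $0\le t<m$ there is at least one edge bucket pending at state $t$ that does not involve the partition $e_t$ scheduled for eviction (so that this bucket can be computed while $e_t$ is swapped out and the next partition is loaded). *)

From mathcomp Require Import all_boot.
Set Implicit Arguments. Unset Strict Implicit. Unset Printing Implicit Defensive.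

Definition evicted n (B : nat -> {set 'I_n}) (t : nat) : option 'I_n :=
  [pick x in B t :\: B t.+1].

Definition loaded n (B : nat -> {set 'I_n}) (t : nat) : option 'I_n :=
  [pick x in B t :\: B t.-1].

Definition pending n (B : nat -> {set 'I_n}) (t : nat) (a b : 'I_n) : Prop :=
  (a \in B t) /\ (b \in B t) /\
  (forall s, s < t -> ~ ((a \in B s) /\ (b \in B s))).

Definition consecutive_cover n (B : nat -> {set 'I_n}) (m : nat) (a b : 'I_n) : Prop :=
  forall s u v, s <= u <= v -> v <= m ->
    a \in B s -> b \in B s -> a \in B v -> b \in B v ->
    (a \in B u) && (b \in B u).

Definition prefetching_supported n (B : nat -> {set 'I_n}) (m : nat) : Prop :=
  forall t, t < m -> exists a b : 'I_n,
    pending B t a b /\ evicted B t != Some a /\ evicted B t != Some b.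

From mathcomp Require Import all_boot.

Set Implicit Arguments.
Unset Strict Implicit.
Unset Printing Implicit Defensive.

(* At state 0 every pair of buffered partitions is pending, so any two
   partitions other than e_0 will do. At a later state t, let l_t be the
   partition just loaded: since l_t is not in B_(t-1) but is in B_t, and the
   states containing {l_t, b} form an interval, no earlier state contains
   {l_t, b} for any b in B_t; as l_t <> e_t and |B_t| = 3, some b in B_t
   differs from both, and (l_t, b) is the required bucket. *)

Lemma card_gt2_avoid2 (T : finType) (A : {set T}) (a b : T) :
  2 < #|A| -> exists2 y, y \in A & (y != a) && (y != b).
Proof.
move=> A_gt2; apply/exists_inP; apply: contraTT A_gt2 => /exists_inPn avoid.
have /subset_leq_card : A \subset [set a; b].
  apply/subsetP => y /avoid; rewrite !inE negb_and !negbK.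
  by case/orP=> ->; rewrite ?orbT.
rewrite -leqNgt => /leq_trans; apply; by rewrite cards2 ltnS leq_b1.
Qed.

Lemma cardsD_sym (T : finType) (A B : {set T}) :
  #|A| = #|B| -> #|A :\: B| = #|B :\: A|.
Proof. by move=> eq_AB; rewrite !cardsD eq_AB setIC. Qed.

Lemma pick_cards1 (T : finType) (A : {set T}) :
  #|A| = 1 -> exists2 x, A = [set x] & [pick y in A] = Some x.
Proof. by move=> /eqP/cards1P[x ->]; exists x; rewrite ?pick_set1. Qed.

Lemma pending_loaded (n m t : nat) (B : nat -> {set 'I_n}) (a b : 'I_n) :
  t < m -> consecutive_cover B m a b ->
  a \in B t.+1 -> a \notin B t -> b \in B t.+1 -> pending B t.+1 a b.
Proof.
move=> lt_tm cover aB aNB bB; do 2!split=> //; move=> s lt_st [as_ bs].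
have /andP[aBt _] : (a \in B t) && (b \in B t).
  by apply: (cover s t t.+1) => //; rewrite -ltnS lt_st /=.
by rewrite aBt in aNB.
Qed.

Theorem theorem1 (n : nat) (B : nat -> {set 'I_n}) (m : nat) :
  3 < n -> 1 <= m ->
  (forall t, t <= m -> #|B t| = 3) ->
  (forall t, t < m -> #|B t :\: B t.+1| = 1) ->
  (forall t, 1 <= t -> t < m -> loaded B t != evicted B t) ->
  (forall a b : 'I_n, a != b -> consecutive_cover B m a b) ->
  prefetching_supported B m.
Proof.
move=> _ _ card3 cardD loaded_evicted cover t lt_tm.
have [e _ evictedE] := pick_cards1 (cardD t lt_tm).
suff [a [b [pending_ab [ae be]]]] : exists a b, pending B t a b /\ a != e /\ b != e.
  by exists a, b; rewrite [evicted B t]evictedE !(inj_eq (@Some_inj _)) !(eq_sym e) ae be.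
have gt2_B u : u <= m -> 2 < #|B u| by move=> /card3->.
case: t lt_tm evictedE => [|t] lt_tm evictedE.
  have [a aB /andP[ae _]] := card_gt2_avoid2 e e (gt2_B 0 isT).
  have [b bB /andP[be _]] := card_gt2_avoid2 e a (gt2_B 0 isT).
  by exists a, b; rewrite ae be.
have card_loaded : #|B t.+1 :\: B t| = 1.
  by rewrite -cardsD_sym ?cardD ?card3 // ltnW // ltnW.
have [l Dl loadedE] := pick_cards1 card_loaded.
have le : l != e.
  apply/eqP => l_eq_e; move: (loaded_evicted t.+1 isT lt_tm).
  by rewrite [loaded _ _]loadedE [evicted _ _]evictedE l_eq_e eqxx.
have /setDP[lB lNB] : l \in B t.+1 :\: B t by rewrite Dl set11.
have [b bB /andP[be bl]] := card_gt2_avoid2 e l (gt2_B _ (ltnW lt_tm)).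
exists l, b; split; last by split.
apply: (pending_loaded (ltnW lt_tm)) => //.
by apply: cover; rewrite eq_sym.
Qed.
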